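(* Fix $k\ge0$, $D\geq2$, and let $s^j:=(1-\frac jD)s_k+\frac jDs_{k+1}$, $j=0,\dots,D$, with $s^j\in\mathcal{S}$. Let $w^\ast(s^0)=w^\ast_k$ and, for $j=1,\dots,D$, let $w^\ast(s^j)$ be KKT points of $(P_{s^j})$ with $w^\ast(s^D)=w^\ast_{k+1}$. Let $\bar w_{k+1}$ be produced from $\bar w_k=(\bar z_k,\bar\mu_k)$ by the homotopy scheme: set $z:=\bar z_k$, $\mu:=\bar\mu_k$; for $j=1,\dots,D$: replace $z$ by the result of $M$ successive primal sweeps on $L_\rho(\cdot,\mu,s^j)$ started at $z$, then set $\mu:=\mu+\rho G(z,s^j)$; finally $\bar w_{k+1}:=(z,\mu)$. Assume that the standing hypotheses (A), (B), (C) hold for the parameter sequence $(s^j)_{j=0}^D$, the KKT points $(w^\ast(s^j))_{j=0}^D$ and the intermediate iterates $\bar w^j$ (the values of $(z,\mu)$ after step $j$, $\bar w^0=\bar w_k$), with the same constants. Assume $\beta_w(\rho,M)<1$, $\beta_s(\rho,M)<1$, let $r_w,r_s>0$ satisfy $r_w<q_B\rho$, $\delta-(1+\frac{\lambda_H\lambda_B}{\rho})r_w>0$, $r_s<\frac{(1-\beta_w(\rho,M))r_w}{\beta_s(\rho,M)}$ and $\lambda_H\lambda_Br_s<\delta-(1+\frac{\lambda_H\lambda_B}{\rho})r_w$. If $\|\bar w_k-w^\ast_k\|_2<r_w$, $\|s_{k+1}-s_k\|_2\le r_s$ and $\|s_{k+1}-s_k\|_2<\min\{r_A,r_B,\frac{q_B\rho}{\lambda_A\lambda_F}\}$,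 then $$\|\bar w_{k+1}-w^\ast_{k+1}\|_2\leq\beta_w(\rho,M)^D\|\bar w_k-w^\ast_k\|_2+\beta_s(\rho,M)\frac{\sum_{i=0}^{D-1}\beta_w(\rho,M)^i}{D}\|s_{k+1}-s_k\|_2.$$
   Context: Problem data: $z=(z_1,\dots,z_P)\in\mathbb{R}^{n_z}$; $\mathcal{Z}=\mathcal{Z}_1\times\cdots\times\mathcal{Z}_P$ a product of nonempty bounded boxes; $J(z)=\sum_iJ_i(z_i)$ with polynomials $J_i$; polynomial maps $Q_c:\mathbb{R}^{n_z}\to\mathbb{R}^m$, $g_i:\mathbb{R}^{n_i}\to\mathbb{R}^{q_i}$; $T_i\in\mathbb{R}^{q_i\times p}$; $q=\sum q_i$; $\mathcal{S}\subseteq\mathbb{R}^p$; $G(z,s)=(Q_c(z),g_1(z_1)+T_1s,\dots,g_P(z_P)+T_Ps)$; $L_\rho(z,\mu,s)=J(z)+(\mu+\frac\rho2G(z,s))^\top G(z,s)$; for $w=(z,\mu)$, $F(w,s)=(\nabla J(z)+\nabla_zG(z,s)^\top\mu,\ G(z,s))$; $\mathcal{N}:=\mathcal{N}_{\mathcal{Z}\times\mathbb{R}^{m+q}}$. A KKT point of $(P_s)$: $\min J(z)$ s.t. $G(z,s)=0$, $z\in\mathcal{Z}$, is $w$ with $0\in F(w,s)+\mathcal{N}(w)$. For a reference multiplier $\tilde\mu$: $H^{\tilde\mu}_\rho(w,d,s):=(\nabla J(z)+\nabla_zG(z,s)^\top\mu,\ G(z,s)+d+(\tilde\mu-\mu)/\rho)$.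 Constants: $\lambda_F:=P\max_i\|T_i\|_2$; $\lambda_H>0$ with $\|H^{\tilde\mu}_\rho(w,d,s)-H^{\tilde\mu}_\rho(w,d',s')\|\le\lambda_H\|(d,s)-(d',s')\|$ for all arguments; $\lambda_G>0$ a Lipschitz constant of $z\mapsto G(z,s)$ on $\mathcal{Z}$ (independent of $s$). Primal sweep on $L_\rho(\cdot,\mu,s)$: block-coordinate projected-gradient pass over $i=1,\dots,P$ in order, each block update $z_i\leftarrow\pi_{\mathcal{Z}_i}(z_i-\frac1{c_i}\nabla_{z_i}L_\rho)$ (gradient evaluated with already updated preceding blocks) with curvature $c_i$ obtained by backtracking (multiply by $\beta>1$ from an initial $c_i^0>0$) until $f(u)+\frac{\alpha_i}2\|u-z_i\|^2\le f(z_i)+\nabla f(z_i)^\top(u-z_i)+\frac{c_i}2\|u-z_i\|^2$ for the block function $f$, with $\alpha_i>0$. Standing hypotheses for a parameter sequence $(\sigma_j)_{j\ge0}\subset\mathcal{S}$, KKT points $w^\ast_j=(z^\ast_j,\mu^\ast_j)$ of $(P_{\sigma_j})$, and iterates $\bar w_j=(\bar z_j,\bar\mu_j)$ with $\bar z_{j+1}$ = result of $M$ sweeps on $L_\rho(\cdot,\bar\mu_j,\sigma_{j+1})$ from $\bar z_j$ and $\bar\mu_{j+1}=\bar\mu_j+\rho G(\bar z_{j+1},\sigma_{j+1})$; with $z^\infty_j$ the limit of infinitely many such sweeps, $w^\infty_j:=(z^\infty_j,\bar\mu_j+\rho G(z^\infty_j,\sigma_{j+1}))$, $d_j:=(\bar\mu_j-\mu^\ast_j)/\rho$;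 for every $j$: (A) constants $r_A,\delta_A,\lambda_A>0$ such that for every $s\in\mathcal{B}(\sigma_j,r_A)\cap\mathcal{S}$ there is a unique $w^\ast(s)\in\mathcal{B}(w^\ast_j,\delta_A)$ with $0\in F(w^\ast(s),s)+\mathcal{N}(w^\ast(s))$, $\|w^\ast(s)-w^\ast(s')\|\le\lambda_A\|F(w^\ast(s'),s)-F(w^\ast(s'),s')\|$ for $s,s'$ in that ball, and $w^\ast_{j+1}=w^\ast(\sigma_{j+1})$ whenever $\|\sigma_{j+1}-\sigma_j\|<r_A$; (B) constants $r_B,q_B,\lambda_B>0$, $\delta_B\ge\delta_A$ such that for all $d\in\mathcal{B}(0,q_B)$, $s\in\mathcal{B}(\sigma_j,r_B)\cap\mathcal{S}$ there is a unique $w^\ast_j(d,s)\in\mathcal{B}(w^\ast_j,\delta_B)$ with $0\in H^{\mu^\ast_j}_\rho(w^\ast_j(d,s),d,s)+\mathcal{N}(w^\ast_j(d,s))$ and $\|w^\ast_j(d,s)-w^\ast_j(d',s')\|\le\lambda_B\|H^{\mu^\ast_j}_\rho(w^\ast_j(d',s'),d,s)-H^{\mu^\ast_j}_\rho(w^\ast_j(d',s'),d',s')\|$; (C) constants $C,\delta,\psi>0$ such that $z^\infty_j$ exists, $w^\infty_j=w^\ast_j(d_j,\sigma_{j+1})$ whenever $d_j\in\mathcal{B}(0,q_B)$ and $\|\sigma_{j+1}-\sigma_j\|<r_B$, and $\|\bar z_j-z^\infty_j\|<\delta$ implies $\|\bar z_{j+1}-z^\infty_j\|\le CM^{-\psi}\|\bar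 z_j-z^\infty_j\|$. Coefficients: $\beta_w(\rho,M):=C(1+\rho\lambda_G)(1+\frac{\lambda_B\lambda_H}{\rho})M^{-\psi}+\frac{\lambda_B\lambda_H}{\rho}$ and $\beta_s(\rho,M):=C(1+\rho\lambda_G)\lambda_B\lambda_HM^{-\psi}+\frac{\lambda_B\lambda_H\lambda_A\lambda_F}{\rho}$. Here $\rho>0$ and $M\ge1$ are fixed; $(s_k)$ is a parameter sequence with KKT points $w^\ast_k$ of $(P_{s_k})$ and $\bar w_k=(\bar z_k,\bar\mu_k)$, $\bar z_k\in\mathcal{Z}$, the current suboptimal iterate. *)

From Stdlib Require Import Reals Lra List Arith Bool.
Open Scope R_scope.

(** * Finite-dimensional real vectors, represented as [nat -> R] with an
    explicit dimension; only coordinates [< dim] are meaningful. *)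
Definition vec := nat -> R.

Fixpoint fsum (n : nat) (f : nat -> R) : R :=
  match n with O => 0 | S n' => fsum n' f + f n' end.
Fixpoint nsum (n : nat) (f : nat -> nat) : nat :=
  match n with O => O | S n' => (nsum n' f + f n')%nat end.
Fixpoint fmax (n : nat) (f : nat -> R) : R :=
  match n with O => 0 | S n' => Rmax (fmax n' f) (f n') end.

Definition vsub (x y : vec) : vec := fun i => x i - y i.
Definition dot (n : nat) (x y : vec) : R := fsum n (fun i => x i * y i).
Definition sqnorm (n : nat) (x : vec) : R := fsum n (fun i => x i ^ 2).
Definition vnorm (n : nat) (x : vec) : R := sqrt (sqnorm n x).

Definition matvec (p : nat) (T : nat -> nat -> R) (x : vec) : vec :=
  fun r => fsum p (fun c => T r c * x c).
Definition is_opnorm (q p : nat) (T : nat -> nat -> R) (L : R) : Prop :=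
  is_lub (fun y => exists x, vnorm p x <= 1 /\ y = vnorm q (matvec p T x)) L.

(** * Multivariate real polynomials: lists of monomials (coefficient, exponents);
    the exponent list [e] stands for prod_i x_i^(nth i e 0). *)
Definition mono := (R * list nat)%type.
Definition mpoly := list mono.

Fixpoint mon_eval (e : list nat) (x : vec) (i : nat) : R :=
  match e with nil => 1 | a :: e' => x i ^ a * mon_eval e' x (S i) end.
Definition peval (p : mpoly) (x : vec) : R :=
  fold_right (fun m acc => fst m * mon_eval (snd m) x 0 + acc) 0 p.

Fixpoint exp_add (e1 e2 : list nat) : list nat :=
  match e1, e2 with
  | nil, _ => e2 | _, nil => e1
  | a :: e1', b :: e2' => (a + b)%nat :: exp_add e1' e2'
  end.
Definition pmul (p q : mpoly) : mpoly :=
  flat_map (fun m1 => map (fun m2 => (fst m1 * fst m2, exp_add (snd m1) (snd m2))) q) p.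
Definition pscale (c : R) (p : mpoly) : mpoly := map (fun m => (c * fst m, snd m)) p.
Definition pconst (c : R) : mpoly := (c, nil) :: nil.
(* polynomial sum is list concatenation [++] *)

Fixpoint dec_nth (k : nat) (e : list nat) : list nat :=
  match e, k with
  | nil, _ => nil
  | a :: e', O => (a - 1)%nat :: e'
  | a :: e', S k' => a :: dec_nth k' e'
  end.
Definition pderiv (k : nat) (p : mpoly) : mpoly :=
  map (fun m => (fst m * INR (nth k (snd m) 0%nat), dec_nth k (snd m))) p.
(** shift variables by [off] (embed a polynomial in the variables of a block) *)
Definition plift (off : nat) (p : mpoly) : mpoly :=
  map (fun m => (fst m, repeat 0%nat off ++ snd m)) p.
Definition pvars_le (n : nat) (p : mpoly) : Prop :=
  Forall (fun m => (length (snd m) <= n)%nat) p.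

Record problem := mkProblem {
  nP : nat;
  nblk : nat -> nat;
  box_lo : nat -> nat -> R;          (* Z_i = prod_{l < n_i} [box_lo i l, box_hi i l] *)
  box_hi : nat -> nat -> R;
  Jpol : nat -> mpoly;               (* J_i, polynomial in n_i variables *)
  nm : nat;
  Qpol : nat -> mpoly;               (* component l < m of Q_c, polynomial in n_z variables *)
  nq : nat -> nat;
  gpol : nat -> nat -> mpoly;        (* component r < q_i of g_i, polynomial in n_i variables *)
  np : nat;
  Tmat : nat -> nat -> nat -> R;     (* Tmat i r c = (T_i)_{r,c}, r < q_i, c < p *)
  Sset : vec -> Prop
}.

Section Derived.
Variable Pb : problem.

Definition off (i : nat) : nat := nsum i (nblk Pb).
Definition nz : nat := off (nP Pb).
Definition qoff (i : nat) : nat := nsum i (nq Pb).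
Definition qtot : nat := qoff (nP Pb).
Definition mq : nat := (nm Pb + qtot)%nat.

Definition wf_problem : Prop :=
  (forall i l, (i < nP Pb)%nat -> (l < nblk Pb i)%nat -> box_lo Pb i l <= box_hi Pb i l) /\
  (forall i, (i < nP Pb)%nat -> pvars_le (nblk Pb i) (Jpol Pb i)) /\
  (forall l, (l < nm Pb)%nat -> pvars_le nz (Qpol Pb l)) /\
  (forall i r, (i < nP Pb)%nat -> (r < nq Pb i)%nat -> pvars_le (nblk Pb i) (gpol Pb i r)).

(** z in Z = Z_1 x ... x Z_P (z is the stacked vector (z_1,...,z_P)) *)
Definition inZ (z : vec) : Prop :=
  forall i l, (i < nP Pb)%nat -> (l < nblk Pb i)%nat ->
    box_lo Pb i l <= z (off i + l)%nat <= box_hi Pb i l.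

(** J(z) = sum_i J_i(z_i) as a polynomial in z *)
Definition Jpoly : mpoly := flat_map (fun i => plift (off i) (Jpol Pb i)) (seq 0 (nP Pb)).

Definition inqblk (i r : nat) : bool := (qoff i <=? r)%nat && (r <? qoff i + nq Pb i)%nat.

(** component r < m+q of G(z,s) = (Q_c(z), g_1(z_1)+T_1 s, ..., g_P(z_P)+T_P s):
    polynomial part in z and affine part in s *)
Definition Gpoly (r : nat) : mpoly :=
  if (r <? nm Pb)%nat then Qpol Pb r
  else flat_map (fun i => if inqblk i (r - nm Pb) then
                             plift (off i) (gpol Pb i (r - nm Pb - qoff i))
                           else nil) (seq 0 (nP Pb)).
Definition Gaff (s : vec) (r : nat) : R :=
  if (r <? nm Pb)%nat then 0
  else fsum (nP Pb) (fun i => if inqblk i (r - nm Pb) then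
                                 fsum (np Pb) (fun c => Tmat Pb i (r - nm Pb - qoff i) c * s c)
                               else 0).
Definition Gval (z s : vec) (r : nat) : R := peval (Gpoly r) z + Gaff s r.

(** w = (z, mu) *)
Definition W := (vec * vec)%type.
Definition wsub (w w' : W) : W := (vsub (fst w) (fst w'), vsub (snd w) (snd w')).
Definition wnorm (w : W) : R := sqrt (sqnorm nz (fst w) + sqnorm mq (snd w)).
Definition weq (w w' : W) : Prop :=
  (forall k, (k < nz)%nat -> fst w k = fst w' k) /\ (forall r, (r < mq)%nat -> snd w r = snd w' r).

Definition Fz (w : W) (k : nat) : R :=
  peval (pderiv k Jpoly) (fst w) + fsum mq (fun r => peval (pderiv k (Gpoly r)) (fst w) * snd w r).
Definition Ffun (w : W) (s : vec) : W := (fun k => Fz w k, fun r => Gval (fst w) s r).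
Definition Hfun (rho : R) (mut : vec) (w : W) (d s : vec) : W :=
  (fun k => Fz w k, fun r => Gval (fst w) s r + d r + (mut r - snd w r) / rho).

(** normal cone of Z x R^{m+q} at w (empty if w is outside) *)
Definition normal_cone (w v : W) : Prop :=
  inZ (fst w) /\
  forall w', inZ (fst w') ->
    dot nz (fst v) (vsub (fst w') (fst w)) + dot mq (snd v) (vsub (snd w') (snd w)) <= 0.
Definition zero_in_plus_N (Fv w : W) : Prop :=
  exists v, normal_cone w v /\
    (forall k, (k < nz)%nat -> fst Fv k + fst v k = 0) /\
    (forall r, (r < mq)%nat -> snd Fv r + snd v r = 0).
Definition KKT (w : W) (s : vec) : Prop := zero_in_plus_N (Ffun w s) w.

(** augmented Lagrangian L_rho(z,mu,s) as a polynomial in z *)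
Definition Gpoly_s (s : vec) (r : nat) : mpoly := Gpoly r ++ pconst (Gaff s r).
Definition Lpoly (rho : R) (mu s : vec) : mpoly :=
  Jpoly ++ flat_map (fun r => pmul (pconst (mu r) ++ pscale (rho / 2) (Gpoly_s s r)) (Gpoly_s s r))
                    (seq 0 mq).
Definition Lval (rho : R) (mu s z : vec) : R := peval (Lpoly rho mu s) z.
Definition gradL (rho : R) (mu s z : vec) (k : nat) : R := peval (pderiv k (Lpoly rho mu s)) z.

Definition clamp (a b x : R) : R := Rmax a (Rmin b x).
Definition blk (i : nat) (z : vec) : vec := fun l => z (off i + l)%nat.
Definition upd (i : nat) (z u : vec) : vec :=
  fun k => if (off i <=? k)%nat && (k <? off i + nblk Pb i)%nat then u (k - off i)%nat else z k.
Definition proj_step (rho : R) (mu s : vec) (i : nat) (z : vec) (c : R) : vec :=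
  fun l => clamp (box_lo Pb i l) (box_hi Pb i l)
                 (z (off i + l)%nat - gradL rho mu s z (off i + l)%nat / c).
(** backtracking acceptance test for block function f = L_rho(z with block i := .) *)
Definition bt_cond (rho : R) (mu s : vec) (alpha : nat -> R) (i : nat) (z : vec) (c : R) : Prop :=
  let u := proj_step rho mu s i z c in
  let dz := vsub u (blk i z) in
  Lval rho mu s (upd i z u) + alpha i / 2 * sqnorm (nblk Pb i) dz
    <= Lval rho mu s z + dot (nblk Pb i) (fun l => gradL rho mu s z (off i + l)%nat) dz
       + c / 2 * sqnorm (nblk Pb i) dz.
Definition block_step (c0 alpha : nat -> R) (beta rho : R) (mu s : vec) (i : nat) (z z' : vec) : Prop :=
  exists t : nat,
    bt_cond rho mu s alpha i z (c0 i * beta ^ t) /\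
    (forall t', (t' < t)%nat -> ~ bt_cond rho mu s alpha i z (c0 i * beta ^ t')) /\
    (forall k, z' k = upd i z (proj_step rho mu s i z (c0 i * beta ^ t)) k).
Definition sweep (c0 alpha : nat -> R) (beta rho : R) (mu s : vec) (z z' : vec) : Prop :=
  exists zs : nat -> vec,
    (forall k, zs O k = z k) /\
    (forall i, (i < nP Pb)%nat -> block_step c0 alpha beta rho mu s i (zs i) (zs (S i))) /\
    (forall k, z' k = zs (nP Pb) k).
Definition Msweeps (c0 alpha : nat -> R) (beta rho : R) (mu s : vec) (M : nat) (z z' : vec) : Prop :=
  exists zs : nat -> vec,
    (forall k, zs O k = z k) /\
    (forall n, (n < M)%nat -> sweep c0 alpha beta rho mu s (zs n) (zs (S n))) /\
    (forall k, z' k = zs M k).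
Definition sweep_limit (c0 alpha : nat -> R) (beta rho : R) (mu s : vec) (z zinf : vec) : Prop :=
  exists zs : nat -> vec,
    (forall k, zs O k = z k) /\
    (forall n, sweep c0 alpha beta rho mu s (zs n) (zs (S n))) /\
    (forall k, (k < nz)%nat -> Un_cv (fun n => zs n k) (zinf k)).

Definition lamF_def (lamF : R) : Prop :=
  exists L : nat -> R,
    (forall i, (i < nP Pb)%nat -> is_opnorm (nq Pb i) (np Pb) (Tmat Pb i) (L i)) /\
    lamF = INR (nP Pb) * fmax (nP Pb) L.
Definition lamH_prop (rho lamH : R) : Prop :=
  0 < lamH /\
  forall (mut : vec) (w : W) (d d' s s' : vec),
    wnorm (wsub (Hfun rho mut w d s) (Hfun rho mut w d' s'))
      <= lamH * sqrt (sqnorm mq (vsub d d') + sqnorm (np Pb) (vsub s s')).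
Definition lamG_prop (lamG : R) : Prop :=
  0 < lamG /\
  forall s z z', inZ z -> inZ z' ->
    vnorm mq (vsub (fun r => Gval z s r) (fun r => Gval z' s r)) <= lamG * vnorm nz (vsub z z').

Definition wball (w0 : W) (r : R) (w : W) : Prop := wnorm (wsub w w0) < r.
Definition sball (s0 : vec) (r : R) (s : vec) : Prop := vnorm (np Pb) (vsub s s0) < r.

Definition HypA (sig : nat -> vec) (wst : nat -> W) (j : nat) (rA dA lA : R) : Prop :=
  exists wA : vec -> W,
    (forall s, sball (sig j) rA s -> Sset Pb s ->
       wball (wst j) dA (wA s) /\ KKT (wA s) s /\
       (forall w, wball (wst j) dA w -> KKT w s -> weq w (wA s))) /\
    (forall s s', sball (sig j) rA s -> Sset Pb s -> sball (sig j) rA s' -> Sset Pb s' ->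
       wnorm (wsub (wA s) (wA s')) <= lA * wnorm (wsub (Ffun (wA s') s) (Ffun (wA s') s'))) /\
    (vnorm (np Pb) (vsub (sig (S j)) (sig j)) < rA -> weq (wst (S j)) (wA (sig (S j)))).

Definition HypB (rho : R) (sig : nat -> vec) (wst : nat -> W) (j : nat) (rB qB lB dB : R)
  (wB : vec -> vec -> W) : Prop :=
    (forall d s, vnorm mq d < qB -> sball (sig j) rB s -> Sset Pb s ->
       wball (wst j) dB (wB d s) /\
       zero_in_plus_N (Hfun rho (snd (wst j)) (wB d s) d s) (wB d s) /\
       (forall w, wball (wst j) dB w -> zero_in_plus_N (Hfun rho (snd (wst j)) w d s) w ->
                  weq w (wB d s))) /\
    (forall d s d' s', vnorm mq d < qB -> sball (sig j) rB s -> Sset Pb s ->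
       vnorm mq d' < qB -> sball (sig j) rB s' -> Sset Pb s' ->
       wnorm (wsub (wB d s) (wB d' s'))
         <= lB * wnorm (wsub (Hfun rho (snd (wst j)) (wB d' s') d s)
                             (Hfun rho (snd (wst j)) (wB d' s') d' s'))).

Definition HypC (c0 alpha : nat -> R) (beta rho : R) (M : nat) (sig : nat -> vec) (wst : nat -> W)
  (zbar mubar : nat -> vec) (j : nat) (rB qB : R) (wB : vec -> vec -> W) (Cc del psi : R) : Prop :=
  exists zinf : vec,
    sweep_limit c0 alpha beta rho (mubar j) (sig (S j)) (zbar j) zinf /\
    (let dj := fun r => (mubar j r - snd (wst j) r) / rho in
     vnorm mq dj < qB -> vnorm (np Pb) (vsub (sig (S j)) (sig j)) < rB ->
     weq (zinf, fun r => mubar j r + rho * Gval zinf (sig (S j)) r) (wB dj (sig (S j)))) /\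
    (vnorm nz (vsub (zbar j) zinf) < del ->
     vnorm nz (vsub (zbar (S j)) zinf) <= Cc * Rpower (INR M) (- psi) * vnorm nz (vsub (zbar j) zinf)).

End Derived.

Definition beta_w (Cc lamG lamB lamH psi rho : R) (M : nat) : R :=
  Cc * (1 + rho * lamG) * (1 + lamB * lamH / rho) * Rpower (INR M) (- psi) + lamB * lamH / rho.
Definition beta_s (Cc lamG lamB lamH lamA lamF psi rho : R) (M : nat) : R :=
  Cc * (1 + rho * lamG) * lamB * lamH * Rpower (INR M) (- psi) + lamB * lamH * lamA * lamF / rho.

Definition shom (s : nat -> vec) (k D j : nat) : vec :=
  fun c => (1 - INR j / INR D) * s k c + INR j / INR D * s (S k) c.

(* Each homotopy step is a perturbed contraction.  Only the affine part T s of G depends on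
   the parameter, so by (A) the KKT points drift by at most lamA lamF ||s^(j+1) - s^j||.  By (B)
   the exact augmented-Lagrangian update w_inf lies close to both KKT points, and by (C) the M
   inexact sweeps contract the primal distance to w_inf by C M^-psi, which the multiplier update
   inherits with the factor 1 + rho lamG.  Together,
     e_(j+1) <= beta_w e_j + beta_s ||s_(k+1) - s_k|| / D   with  e_j = ||wbar^j - w*(s^j)||.
   The conditions on r_w and r_s keep e_j < r_w, so the local hypotheses apply at every step, and
   unrolling the D steps gives the bound. *)

From Stdlib Require Import Reals Lra Lia.
Open Scope R_scope.

(** * Finite sums and Euclidean norms *)

Lemma fsum_S n f : fsum (S n) f = fsum n f + f n.
Proof. reflexivity. Qed.

Lemma fsum_ext n f g : (forall i, (i < n)%nat -> f i = g i) -> fsum n f = fsum n g.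
Proof.
  induction n as [|n IH]; intros Hfg; simpl; [reflexivity|].
  rewrite IH by (intros; apply Hfg; lia). rewrite Hfg by lia. reflexivity.
Qed.

Lemma fsum_plus n f g : fsum n (fun i => f i + g i) = fsum n f + fsum n g.
Proof. induction n; simpl; [lra|rewrite IHn; lra]. Qed.

Lemma fsum_minus n f g : fsum n (fun i => f i - g i) = fsum n f - fsum n g.
Proof. induction n; simpl; [lra|rewrite IHn; lra]. Qed.

Lemma fsum_scal n c f : fsum n (fun i => c * f i) = c * fsum n f.
Proof. induction n; simpl; [lra|rewrite IHn; lra]. Qed.

Lemma fsum_const n c : fsum n (fun _ => c) = INR n * c.
Proof. induction n; simpl fsum; [simpl; lra|rewrite IHn, S_INR; lra]. Qed.

Lemma fsum_le n f g : (forall i, (i < n)%nat -> f i <= g i) -> fsum n f <= fsum n g.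
Proof.
  induction n as [|n IH]; intros Hfg; simpl; [lra|].
  assert (fsum n f <= fsum n g) by (apply IH; intros; apply Hfg; lia).
  assert (f n <= g n) by (apply Hfg; lia). lra.
Qed.

Lemma fsum_nonneg n f : (forall i, (i < n)%nat -> 0 <= f i) -> 0 <= fsum n f.
Proof. intros Hf. rewrite <- (Rmult_0_r (INR n)), <- fsum_const. now apply fsum_le. Qed.

Lemma fsum_zero n f : (forall i, (i < n)%nat -> f i = 0) -> fsum n f = 0.
Proof. intros Hf. rewrite (fsum_ext n f (fun _ => 0)), fsum_const by auto. ring. Qed.

Lemma fsum_le_fsum_length m n f : (m <= n)%nat -> (forall i, 0 <= f i) -> fsum m f <= fsum n f.
Proof. intros Hmn Hf. induction Hmn; simpl; [lra|]. specialize (Hf m0). lra. Qed.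

Lemma fsum_swap n m (f : nat -> nat -> R) :
  fsum n (fun i => fsum m (fun j => f i j)) = fsum m (fun j => fsum n (fun i => f i j)).
Proof.
  induction n; simpl.
  - symmetry; now apply fsum_zero.
  - now rewrite IHn, <- fsum_plus.
Qed.

Lemma fsum_mult n f g : fsum n f * fsum n g = fsum n (fun i => fsum n (fun j => f i * g j)).
Proof.
  rewrite Rmult_comm, <- fsum_scal. apply fsum_ext; intros i _.
  rewrite Rmult_comm, <- fsum_scal. reflexivity.
Qed.

Lemma cauchy_schwarz n a b :
  fsum n (fun i => a i * b i) ^ 2 <= fsum n (fun i => a i ^ 2) * fsum n (fun i => b i ^ 2).
Proof.
  assert (Hlagrange :
    fsum n (fun i => fsum n (fun j => (a i * b j - a j * b i) ^ 2))
    = 2 * (fsum n (fun i => a i ^ 2) * fsum n (fun i => b i ^ 2))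
      - 2 * fsum n (fun i => a i * b i) ^ 2).
  { rewrite (fsum_ext n _ (fun i => fsum n (fun j => a i ^ 2 * b j ^ 2)
                                   + fsum n (fun j => a j ^ 2 * b i ^ 2)
                                   - 2 * fsum n (fun j => a i * b i * (a j * b j)))).
    - rewrite fsum_minus, fsum_plus, fsum_scal.
      rewrite (fsum_swap n n (fun i j => a j ^ 2 * b i ^ 2)), <- Rsqr_pow2.
      unfold Rsqr. rewrite !fsum_mult. ring.
    - intros i _. rewrite <- fsum_scal, <- fsum_plus, <- fsum_minus.
      apply fsum_ext; intros; ring. }
  assert (0 <= fsum n (fun i => fsum n (fun j => (a i * b j - a j * b i) ^ 2))).
  { apply fsum_nonneg; intros; apply fsum_nonneg; intros; apply pow2_ge_0. }
  lra.
Qed.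

Lemma fsum_sqr_le n a : fsum n a ^ 2 <= INR n * fsum n (fun i => a i ^ 2).
Proof.
  pose proof (cauchy_schwarz n a (fun _ => 1)) as Hcs.
  cbv beta in Hcs.
  rewrite (fsum_ext n (fun i => a i * 1) a), fsum_const in Hcs by (intros; ring).
  lra.
Qed.

Lemma sqnorm_nonneg n x : 0 <= sqnorm n x.
Proof. apply fsum_nonneg; intros; apply pow2_ge_0. Qed.

Lemma vnorm_nonneg n x : 0 <= vnorm n x.
Proof. apply sqrt_pos. Qed.

Lemma vnorm_pow2 n x : vnorm n x ^ 2 = sqnorm n x.
Proof. unfold vnorm. rewrite <- Rsqr_pow2. apply Rsqr_sqrt, sqnorm_nonneg. Qed.

Lemma sqrt_le_of_pow2_le S a : 0 <= a -> S <= a ^ 2 -> sqrt S <= a.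
Proof. intros Ha HS. rewrite <- (sqrt_pow2 a Ha). now apply sqrt_le_1_alt. Qed.

Lemma sqrt_add_le a b : 0 <= a -> 0 <= b -> sqrt (a + b) <= sqrt a + sqrt b.
Proof.
  intros Ha Hb. pose proof (sqrt_pos a); pose proof (sqrt_pos b).
  apply sqrt_le_of_pow2_le; [lra|].
  pose proof (sqrt_sqrt a Ha); pose proof (sqrt_sqrt b Hb). nra.
Qed.

Lemma vnorm_ext n x y : (forall i, (i < n)%nat -> x i = y i) -> vnorm n x = vnorm n y.
Proof. intros Hxy. unfold vnorm, sqnorm. f_equal. apply fsum_ext; intros; now rewrite Hxy. Qed.

Lemma vnorm_zero n x : (forall i, (i < n)%nat -> x i = 0) -> vnorm n x = 0.
Proof.
  intros Hx. unfold vnorm, sqnorm. rewrite fsum_zero; [apply sqrt_0|].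
  intros; rewrite Hx; auto; ring.
Qed.

Lemma vnorm_sub_diag n x : vnorm n (vsub x x) = 0.
Proof. apply vnorm_zero; intros; unfold vsub; ring. Qed.

Lemma vnorm_sub_sym n x y : vnorm n (vsub x y) = vnorm n (vsub y x).
Proof. unfold vnorm, sqnorm, vsub. f_equal. apply fsum_ext; intros; ring. Qed.

Lemma vnorm_scal n c x : vnorm n (fun i => c * x i) = Rabs c * vnorm n x.
Proof.
  unfold vnorm, sqnorm.
  rewrite (fsum_ext n _ (fun i => c ^ 2 * x i ^ 2)) by (intros; ring).
  rewrite fsum_scal, sqrt_mult by (apply pow2_ge_0 || apply sqnorm_nonneg).
  now rewrite <- Rsqr_pow2, sqrt_Rsqr_abs.
Qed.

Lemma vnorm_add_le n x y : vnorm n (fun i => x i + y i) <= vnorm n x + vnorm n y.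
Proof.
  pose proof (vnorm_nonneg n x); pose proof (vnorm_nonneg n y).
  apply sqrt_le_of_pow2_le; [lra|].
  set (c := fsum n (fun i => x i * y i)).
  assert (Hc : c <= vnorm n x * vnorm n y).
  { pose proof (cauchy_schwarz n x y) as Hcs. fold c in Hcs.
    change (fsum n (fun i => x i ^ 2)) with (sqnorm n x) in Hcs.
    change (fsum n (fun i => y i ^ 2)) with (sqnorm n y) in Hcs.
    rewrite <- !vnorm_pow2 in Hcs.
    assert (0 <= vnorm n x * vnorm n y) by now apply Rmult_le_pos.
    destruct (Rle_dec c (vnorm n x * vnorm n y)); [assumption|nra]. }
  replace (sqnorm n (fun i => x i + y i)) with (sqnorm n x + 2 * c + sqnorm n y).
  - rewrite <- !vnorm_pow2. nra.
  - unfold sqnorm, c. rewrite <- fsum_scal, <- !fsum_plus. apply fsum_ext; intros; ring.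
Qed.

Lemma vnorm_sub_triangle n x y z : vnorm n (vsub x z) <= vnorm n (vsub x y) + vnorm n (vsub y z).
Proof.
  rewrite (vnorm_ext n (vsub x z) (fun i => vsub x y i + vsub y z i)) by (intros; unfold vsub; ring).
  apply vnorm_add_le.
Qed.

Lemma sqnorm_eq0_coord n x : sqnorm n x = 0 -> forall i, (i < n)%nat -> x i = 0.
Proof.
  intros Hx i Hi.
  assert (Hxi : fsum (S i) (fun l => x l ^ 2) <= sqnorm n x).
  { apply fsum_le_fsum_length; [lia|intros; apply pow2_ge_0]. }
  rewrite fsum_S in Hxi.
  assert (0 <= fsum i (fun l => x l ^ 2)) by (apply fsum_nonneg; intros; apply pow2_ge_0).
  apply Rsqr_0_uniq, Rle_antisym; [rewrite Rsqr_pow2; lra|apply Rle_0_sqr].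
Qed.

Lemma sqrt_pow2_add_triangle p1 p2 u1 u2 v1 v2 :
  0 <= p1 -> 0 <= p2 -> p1 <= u1 + v1 -> p2 <= u2 + v2 ->
  sqrt (p1 ^ 2 + p2 ^ 2) <= sqrt (u1 ^ 2 + u2 ^ 2) + sqrt (v1 ^ 2 + v2 ^ 2).
Proof.
  intros Hp1 Hp2 H1 H2.
  pose proof (vnorm_add_le 2 (fun i => match i with O => u1 | _ => u2 end)
                             (fun i => match i with O => v1 | _ => v2 end)) as Hmink.
  unfold vnorm, sqnorm in Hmink; cbn [fsum] in Hmink. rewrite !Rplus_0_l in Hmink.
  eapply Rle_trans; [|exact Hmink].
  apply sqrt_le_1_alt, Rplus_le_compat; apply pow_incr; lra.
Qed.

Section PairNorm.
Variable Pb : problem.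

Lemma wnorm_nonneg w : 0 <= wnorm Pb w.
Proof. apply sqrt_pos. Qed.

Lemma wnorm_vnorm w : wnorm Pb w = sqrt (vnorm (nz Pb) (fst w) ^ 2 + vnorm (mq Pb) (snd w) ^ 2).
Proof. now rewrite !vnorm_pow2. Qed.

Lemma wnorm_sub_triangle a b c :
  wnorm Pb (wsub a c) <= wnorm Pb (wsub a b) + wnorm Pb (wsub b c).
Proof.
  rewrite !wnorm_vnorm. apply sqrt_pow2_add_triangle; try apply vnorm_nonneg; apply vnorm_sub_triangle.
Qed.

Lemma wnorm_sub_sym a b : wnorm Pb (wsub a b) = wnorm Pb (wsub b a).
Proof. rewrite !wnorm_vnorm. cbn [fst snd wsub]. now rewrite (vnorm_sub_sym _ (fst a)), (vnorm_sub_sym _ (snd a)). Qed.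

Lemma wnorm_sub_diag a : wnorm Pb (wsub a a) = 0.
Proof. rewrite wnorm_vnorm. cbn [fst snd wsub]. rewrite !vnorm_sub_diag.
  replace (0 ^ 2 + 0 ^ 2) with 0 by ring. apply sqrt_0.
Qed.

Lemma vnorm_fst_le_wnorm w : vnorm (nz Pb) (fst w) <= wnorm Pb w.
Proof.
  apply sqrt_le_1_alt. pose proof (sqnorm_nonneg (mq Pb) (snd w)). lra.
Qed.

Lemma vnorm_snd_le_wnorm w : vnorm (mq Pb) (snd w) <= wnorm Pb w.
Proof.
  apply sqrt_le_1_alt. pose proof (sqnorm_nonneg (nz Pb) (fst w)). lra.
Qed.

Lemma wnorm_le_fst_snd w : wnorm Pb w <= vnorm (nz Pb) (fst w) + vnorm (mq Pb) (snd w).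
Proof. apply sqrt_add_le; apply sqnorm_nonneg. Qed.

Lemma wnorm_sub_weq_l a a' b : weq Pb a a' -> wnorm Pb (wsub a b) = wnorm Pb (wsub a' b).
Proof.
  intros [Hz Hmu]. rewrite !wnorm_vnorm. cbn [fst snd wsub].
  rewrite (vnorm_ext _ (vsub (fst a) _) (vsub (fst a') (fst b))),
          (vnorm_ext _ (vsub (snd a) _) (vsub (snd a') (snd b))); auto;
    intros; unfold vsub; [rewrite Hmu|rewrite Hz]; auto.
Qed.

Lemma wnorm_sub_weq_r a b b' : weq Pb b b' -> wnorm Pb (wsub a b) = wnorm Pb (wsub a b').
Proof. intros H. rewrite (wnorm_sub_sym a b), (wnorm_sub_sym a b'). now apply wnorm_sub_weq_l. Qed.

End PairNorm.

Lemma fmax_nonneg n L : 0 <= fmax n L.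
Proof. induction n; simpl; [lra|]. eapply Rle_trans; [exact IHn|apply Rmax_l]. Qed.

Lemma fmax_ge n L i : (i < n)%nat -> L i <= fmax n L.
Proof.
  induction n; intros Hi; [lia|]. simpl. destruct (Nat.eq_dec i n) as [->|Hne].
  - apply Rmax_r.
  - eapply Rle_trans; [apply IHn; lia|apply Rmax_l].
Qed.

Lemma is_opnorm_bound q p T L :
  is_opnorm q p T L -> 0 <= L /\ forall x, vnorm q (matvec p T x) <= L * vnorm p x.
Proof.
  intros [Hub _].
  assert (HL : 0 <= L).
  { apply Rle_trans with (vnorm q (matvec p T (fun _ => 0))); [apply vnorm_nonneg|].
    apply Hub. exists (fun _ => 0). split; auto. rewrite vnorm_zero; auto; lra. }
  split; [exact HL|]. intros x.
  destruct (Rle_lt_or_eq_dec _ _ (vnorm_nonneg p x)) as [Ht|Hx0].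
  - set (t := vnorm p x) in *.
    assert (Hunit : vnorm q (matvec p T (fun c => / t * x c)) <= L).
    { apply Hub. exists (fun c => / t * x c). split; [|reflexivity].
      rewrite vnorm_scal, Rabs_right by (left; now apply Rinv_0_lt_compat).
      fold t. rewrite Rinv_l; lra. }
    rewrite (vnorm_ext q _ (fun r => / t * matvec p T x r)), vnorm_scal, Rabs_right in Hunit.
    + apply Rmult_le_compat_l with (r := t) in Hunit; [|lra].
      rewrite <- Rmult_assoc, Rinv_r in Hunit; lra.
    + left; now apply Rinv_0_lt_compat.
    + intros r _. unfold matvec. rewrite <- fsum_scal. apply fsum_ext; intros; ring.
  - rewrite <- Hx0, vnorm_zero; [lra|].
    symmetry in Hx0. apply sqrt_eq_0 in Hx0; [|apply sqnorm_nonneg].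
    intros r _. apply fsum_zero. intros c Hc. rewrite (sqnorm_eq0_coord p x Hx0 c Hc). ring.
Qed.

Lemma fsum_window N a n f :
  fsum N (fun r => if ((a <=? r)%nat && (r <? a + n)%nat)%bool then f (r - a)%nat else 0)
  = fsum (Nat.min n (N - a)) f.
Proof.
  induction N; [simpl; destruct n; reflexivity|].
  rewrite fsum_S, IHN.
  destruct (Nat.leb_spec a N); destruct (Nat.ltb_spec N (a + n)); simpl andb.
  - replace (Nat.min n (S N - a)) with (S (N - a)) by lia.
    replace (Nat.min n (N - a)) with (N - a)%nat by lia. reflexivity.
  - replace (Nat.min n (S N - a)) with (Nat.min n (N - a)) by lia. ring.
  - replace (Nat.min n (S N - a)) with (Nat.min n (N - a)) by lia. ring.
  - replace (Nat.min n (S N - a)) with (Nat.min n (N - a)) by lia. ring.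
Qed.

(** * Parameter dependence of G *)

Section AffinePart.
Variable Pb : problem.

Definition Tblock (x : vec) (i r : nat) : R :=
  if (r <? nm Pb)%nat then 0
  else if inqblk Pb i (r - nm Pb) then matvec (np Pb) (Tmat Pb i) x (r - nm Pb - qoff Pb i)%nat
  else 0.

Lemma Gval_sub_param z s s' r :
  Gval Pb z s' r - Gval Pb z s r = fsum (nP Pb) (fun i => Tblock (vsub s' s) i r).
Proof.
  unfold Gval. replace (_ + Gaff Pb s' r - _) with (Gaff Pb s' r - Gaff Pb s r) by ring.
  unfold Gaff, Tblock. destruct (r <? nm Pb)%nat; [rewrite fsum_zero; auto; ring|].
  rewrite <- fsum_minus. apply fsum_ext; intros i _. destruct (inqblk Pb i (r - nm Pb)); [|ring].
  unfold matvec, vsub. rewrite <- fsum_minus. apply fsum_ext; intros; ring.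
Qed.

Lemma sqnorm_Tblock_le x i L :
  is_opnorm (nq Pb i) (np Pb) (Tmat Pb i) L ->
  sqnorm (mq Pb) (Tblock x i) <= (L * vnorm (np Pb) x) ^ 2.
Proof.
  intros HL. set (v := matvec (np Pb) (Tmat Pb i) x).
  assert (Hwindow : sqnorm (mq Pb) (Tblock x i) =
    fsum (mq Pb) (fun r => if ((nm Pb + qoff Pb i <=? r)%nat && (r <? nm Pb + qoff Pb i + nq Pb i)%nat)%bool
                          then (fun r' => v r' ^ 2) (r - (nm Pb + qoff Pb i))%nat else 0)).
  { apply fsum_ext; intros r _. unfold Tblock, inqblk.
    destruct (Nat.ltb_spec r (nm Pb)).
    - replace (nm Pb + qoff Pb i <=? r)%nat with false by (symmetry; apply Nat.leb_gt; lia).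
      simpl; ring.
    - destruct (Nat.leb_spec (qoff Pb i) (r - nm Pb)), (Nat.ltb_spec (r - nm Pb) (qoff Pb i + nq Pb i)),
               (Nat.leb_spec (nm Pb + qoff Pb i) r), (Nat.ltb_spec r (nm Pb + qoff Pb i + nq Pb i));
        simpl; try lia; try ring.
      now replace (r - nm Pb - qoff Pb i)%nat with (r - (nm Pb + qoff Pb i))%nat by lia. }
  rewrite Hwindow, (fsum_window _ _ _ (fun r' => v r' ^ 2)).
  destruct (is_opnorm_bound _ _ _ _ HL) as [HL0 HLx].
  eapply Rle_trans.
  - apply (fsum_le_fsum_length _ (nq Pb i) (fun r' => v r' ^ 2)); [lia|intros; apply pow2_ge_0].
  - change (fsum (nq Pb i) (fun r' => v r' ^ 2)) with (sqnorm (nq Pb i) v).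
    rewrite <- vnorm_pow2. apply pow_incr. split; [apply vnorm_nonneg|apply HLx].
Qed.

Lemma lamF_nonneg lamF : lamF_def Pb lamF -> 0 <= lamF.
Proof. intros [L [_ ->]]. apply Rmult_le_pos; [apply pos_INR|apply fmax_nonneg]. Qed.

Lemma Gval_param_lipschitz lamF z s s' : lamF_def Pb lamF ->
  vnorm (mq Pb) (vsub (fun r => Gval Pb z s' r) (fun r => Gval Pb z s r))
    <= lamF * vnorm (np Pb) (vsub s' s).
Proof.
  intros HlamF. pose proof (lamF_nonneg lamF HlamF) as HlamF0.
  destruct HlamF as [L [HL ->]].
  set (P := nP Pb). set (F := fmax P L). set (nd := vnorm (np Pb) (vsub s' s)).
  assert (HF : 0 <= F) by apply fmax_nonneg.
  assert (Hnd : 0 <= nd) by apply vnorm_nonneg.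
  apply sqrt_le_of_pow2_le; [apply Rmult_le_pos; [exact HlamF0|exact Hnd]|].
  unfold sqnorm, vsub. rewrite (fsum_ext _ _ (fun r => fsum P (fun i => Tblock (vsub s' s) i r) ^ 2))
    by (intros; now rewrite Gval_sub_param).
  (* (sum of P blocks)^2 <= P * sum of squares: this is the factor P in lamF *)
  eapply Rle_trans; [apply fsum_le; intros; apply fsum_sqr_le|].
  rewrite fsum_scal, <- fsum_swap.
  eapply Rle_trans.
  - apply Rmult_le_compat_l; [apply pos_INR|].
    apply (fsum_le _ _ (fun _ => (F * nd) ^ 2)). intros i Hi.
    eapply Rle_trans; [apply (sqnorm_Tblock_le _ i (L i)), HL, Hi|].
    apply pow_incr. split.
    + apply Rmult_le_pos; [|exact Hnd]. now apply (is_opnorm_bound _ _ _ _ (HL i Hi)).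
    + apply Rmult_le_compat_r; [exact Hnd|]. now apply fmax_ge.
  - rewrite fsum_const. right; ring.
Qed.
End AffinePart.

(** * Feasibility of the primal iterates *)

Lemma Un_cv_bounds u l a b : Un_cv u l -> (forall n, a <= u n <= b) -> a <= l <= b.
Proof.
  intros Hcv Hab.
  assert (Hconst : forall c, Un_cv (fun _ => c) c).
  { intros c eps Heps. exists O. intros. unfold Rdist. rewrite Rminus_diag, Rabs_R0. exact Heps. }
  split; [apply (Rle_cv_lim (Un := fun _ => a) (Vn := u))|apply (Rle_cv_lim (Un := u) (Vn := fun _ => b))];
    auto; apply Hab.
Qed.

Section Feasibility.
Variable Pb : problem.

Lemma inZ_ext z z' : (forall k, z k = z' k) -> inZ Pb z -> inZ Pb z'.
Proof. intros Hzz' Hz i l Hi Hl. rewrite <- Hzz'. auto. Qed.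

Lemma off_le i j : (i <= j)%nat -> (off Pb i <= off Pb j)%nat.
Proof. induction 1; auto. change (off Pb (S m)) with (off Pb m + nblk Pb m)%nat. lia. Qed.

Lemma upd_inZ i z u : (i < nP Pb)%nat -> inZ Pb z ->
  (forall l, (l < nblk Pb i)%nat -> box_lo Pb i l <= u l <= box_hi Pb i l) ->
  inZ Pb (upd Pb i z u).
Proof.
  intros Hi Hz Hu i' l Hi' Hl. unfold upd.
  destruct (Nat.lt_total i' i) as [Hlt|[->|Hgt]].
  - assert (off Pb (S i') <= off Pb i)%nat by (apply off_le; lia).
    change (off Pb (S i')) with (off Pb i' + nblk Pb i')%nat in *.
    replace (off Pb i <=? off Pb i' + l)%nat with false by (symmetry; apply Nat.leb_gt; lia).
    apply Hz; auto.
  - replace (off Pb i <=? off Pb i + l)%nat with true by (symmetry; apply Nat.leb_le; lia).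
    replace (off Pb i + l <? off Pb i + nblk Pb i)%nat with true by (symmetry; apply Nat.ltb_lt; lia).
    simpl. replace (off Pb i + l - off Pb i)%nat with l by lia. auto.
  - assert (off Pb (S i) <= off Pb i')%nat by (apply off_le; lia).
    change (off Pb (S i)) with (off Pb i + nblk Pb i)%nat in *.
    replace (off Pb i' + l <? off Pb i + nblk Pb i)%nat with false by (symmetry; apply Nat.ltb_ge; lia).
    rewrite Bool.andb_false_r. apply Hz; auto.
Qed.

Lemma block_step_inZ c0 alpha beta rho mu s i z z' : wf_problem Pb -> (i < nP Pb)%nat -> inZ Pb z ->
  block_step Pb c0 alpha beta rho mu s i z z' -> inZ Pb z'.
Proof.
  intros [Hbox _] Hi Hz [t [_ [_ Hz']]]. apply (inZ_ext _ _ (fun k => eq_sym (Hz' k))).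
  apply upd_inZ; auto. intros l Hl. split; [apply Rmax_l|].
  apply Rmax_lub; [now apply Hbox|apply Rmin_l].
Qed.

Lemma inZ_chain (step : nat -> vec -> vec -> Prop) (zs : nat -> vec) n :
  (forall i z z', (i < n)%nat -> inZ Pb z -> step i z z' -> inZ Pb z') ->
  inZ Pb (zs O) -> (forall i, (i < n)%nat -> step i (zs i) (zs (S i))) ->
  forall i, (i <= n)%nat -> inZ Pb (zs i).
Proof.
  intros Hstep H0 Hzs. induction i; intros Hi; [exact H0|].
  apply (Hstep i (zs i)); [lia|apply IHi; lia|apply Hzs; lia].
Qed.

Lemma sweep_inZ c0 alpha beta rho mu s z z' : wf_problem Pb -> inZ Pb z ->
  sweep Pb c0 alpha beta rho mu s z z' -> inZ Pb z'.
Proof.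
  intros Hwf Hz [zs [H0 [Hs Hend]]]. apply (inZ_ext _ _ (fun k => eq_sym (Hend k))).
  apply (inZ_chain (block_step Pb c0 alpha beta rho mu s) zs (nP Pb)); auto.
  - intros i y y' Hi. now apply block_step_inZ.
  - exact (inZ_ext _ _ (fun k => eq_sym (H0 k)) Hz).
Qed.

Lemma Msweeps_inZ c0 alpha beta rho mu s M z z' : wf_problem Pb -> inZ Pb z ->
  Msweeps Pb c0 alpha beta rho mu s M z z' -> inZ Pb z'.
Proof.
  intros Hwf Hz [zs [H0 [Hs Hend]]]. apply (inZ_ext _ _ (fun k => eq_sym (Hend k))).
  apply (inZ_chain (fun _ => sweep Pb c0 alpha beta rho mu s) zs M); auto.
  - intros _ y y' _. now apply sweep_inZ.
  - exact (inZ_ext _ _ (fun k => eq_sym (H0 k)) Hz).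
Qed.

Lemma sweep_limit_inZ c0 alpha beta rho mu s z zinf : wf_problem Pb -> inZ Pb z ->
  sweep_limit Pb c0 alpha beta rho mu s z zinf -> inZ Pb zinf.
Proof.
  intros Hwf Hz [zs [H0 [Hs Hcv]]].
  assert (Hzs : forall n, inZ Pb (zs n)).
  { intros n. apply (inZ_chain (fun _ => sweep Pb c0 alpha beta rho mu s) zs n); auto.
    - intros _ y y' _. now apply sweep_inZ.
    - exact (inZ_ext _ _ (fun k => eq_sym (H0 k)) Hz). }
  intros i l Hi Hl. apply (Un_cv_bounds (fun n => zs n (off Pb i + l)%nat)); [|intros; now apply Hzs].
  apply Hcv. assert (off Pb (S i) <= off Pb (nP Pb))%nat by (apply off_le; lia).
  change (off Pb (S i)) with (off Pb i + nblk Pb i)%nat in *. unfold nz. lia.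
Qed.

Lemma Msweeps_chain_inZ c0 alpha beta rho M (sig : nat -> vec) (zbar mubar : nat -> vec) D :
  wf_problem Pb -> inZ Pb (zbar O) ->
  (forall j, (j < D)%nat -> Msweeps Pb c0 alpha beta rho (mubar j) (sig (S j)) M (zbar j) (zbar (S j))) ->
  forall j, (j <= D)%nat -> inZ Pb (zbar j).
Proof.
  intros Hwf. apply (inZ_chain (fun j => Msweeps Pb c0 alpha beta rho (mubar j) (sig (S j)) M)).
  intros j z z' _. now apply Msweeps_inZ.
Qed.

End Feasibility.

(** * One homotopy step *)

Section Regularity.
Variable Pb : problem.

Lemma zero_in_plus_N_ext Fv Fv' w :
  (forall k, (k < nz Pb)%nat -> fst Fv k = fst Fv' k) ->
  (forall r, (r < mq Pb)%nat -> snd Fv r = snd Fv' r) ->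
  zero_in_plus_N Pb Fv w -> zero_in_plus_N Pb Fv' w.
Proof.
  intros Hz Hmu [v [Hv [Hvz Hvmu]]]. exists v. split; [exact Hv|split].
  - intros k Hk. rewrite <- Hz; auto.
  - intros r Hr. rewrite <- Hmu; auto.
Qed.

Lemma KKT_Hfun rho mut w s : rho <> 0 -> KKT Pb w s ->
  zero_in_plus_N Pb (Hfun Pb rho mut w (fun r => (snd w r - mut r) / rho) s) w.
Proof.
  intros Hrho HK. apply (zero_in_plus_N_ext (Ffun Pb w s)); [reflexivity| |exact HK].
  intros; simpl. field; exact Hrho.
Qed.

Lemma Hfun_lipschitz rho lamH mut w d d' s s' : lamH_prop Pb rho lamH ->
  wnorm Pb (wsub (Hfun Pb rho mut w d s) (Hfun Pb rho mut w d' s'))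
    <= lamH * (vnorm (mq Pb) (vsub d d') + vnorm (np Pb) (vsub s s')).
Proof.
  intros [HlamH Hlip]. eapply Rle_trans; [apply Hlip|].
  apply Rmult_le_compat_l; [lra|]. apply sqrt_add_le; apply sqnorm_nonneg.
Qed.

Lemma vnorm_dual_shift_le rho (c : vec) (w w' : W) : 0 < rho ->
  vnorm (mq Pb) (vsub (fun r => (snd w r - c r) / rho) (fun r => (snd w' r - c r) / rho))
    <= wnorm Pb (wsub w w') / rho.
Proof.
  intros Hrho.
  rewrite (vnorm_ext _ _ (fun r => / rho * snd (wsub w w') r)) by (intros; unfold wsub, vsub; simpl; field; lra).
  rewrite vnorm_scal, Rabs_right by (left; now apply Rinv_0_lt_compat).
  unfold Rdiv. rewrite Rmult_comm. apply Rmult_le_compat_r; [left; now apply Rinv_0_lt_compat|].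
  apply vnorm_snd_le_wnorm.
Qed.

End Regularity.

Lemma Rpower_pos x y : 0 < Rpower x y.
Proof. apply exp_pos. Qed.

Lemma sball_center Pb c r : 0 < r -> sball Pb c r c.
Proof. intros Hr. unfold sball. now rewrite vnorm_sub_diag. Qed.

Lemma wball_center Pb w r : 0 < r -> wball Pb w r w.
Proof. intros Hr. unfold wball. now rewrite wnorm_sub_diag. Qed.

Section HomotopyStep.
Variable Pb : problem.
Variables (c0 alpha : nat -> R) (beta rho : R) (M : nat) (lamF lamH lamG : R).
Variables (rA dA lamA rB qB lamB dB Cc del psi rw rs : R).
Variables (sig : nat -> vec) (wh : nat -> W) (zbar mubar : nat -> vec) (j : nat).
Variables (wB : vec -> vec -> W) (zinf : vec).

Let ds := vnorm (np Pb) (vsub (sig (S j)) (sig j)).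
Let ej := wnorm Pb (wsub (zbar j, mubar j) (wh j)).
(* The shift d_j of (C) is dshift (zbar j, mubar j); a KKT point w of a nearby problem solves
   the equation of (B) with d = dshift w (lemma KKT_Hfun). *)
Let dshift (w : W) : vec := fun r => (snd w r - snd (wh j) r) / rho.
Let winf : W := (zinf, fun r => mubar j r + rho * Gval Pb zinf (sig (S j)) r).

Hypothesis Hwf : wf_problem Pb.
Hypothesis Hrho : 0 < rho.
Hypothesis HlamF : lamF_def Pb lamF.
Hypothesis HlamH : lamH_prop Pb rho lamH.
Hypothesis HlamG : lamG_prop Pb lamG.
Let HlamH_pos : 0 < lamH := proj1 HlamH.
Let HlamG_pos : 0 < lamG := proj1 HlamG.
Let HlamF_nonneg : 0 <= lamF := lamF_nonneg Pb lamF HlamF.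
Hypotheses (HS0 : Sset Pb (sig j)) (HS1 : Sset Pb (sig (S j))).
Hypotheses (HK0 : KKT Pb (wh j) (sig j)) (HK1 : KKT Pb (wh (S j)) (sig (S j))).
Hypotheses (HZ0 : inZ Pb (zbar j)) (HZ1 : inZ Pb (zbar (S j))).
Hypothesis Hmu : forall r, mubar (S j) r = mubar j r + rho * Gval Pb (zbar (S j)) (sig (S j)) r.
Hypotheses (HrA : 0 < rA) (HdA : 0 < dA) (HlamA : 0 < lamA) (HrB : 0 < rB) (HqB : 0 < qB)
  (HlamB : 0 < lamB).
Hypotheses (HdAB : dA <= dB) (HCc : 0 < Cc).
Hypothesis HA : HypA Pb sig wh j rA dA lamA.
Hypothesis HB : HypB Pb rho sig wh j rB qB lamB dB wB.
Hypothesis HC_limit : sweep_limit Pb c0 alpha beta rho (mubar j) (sig (S j)) (zbar j) zinf.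
Hypothesis HC_solution : vnorm (mq Pb) (dshift (zbar j, mubar j)) < qB -> ds < rB ->
  weq Pb winf (wB (dshift (zbar j, mubar j)) (sig (S j))).
Hypothesis HC_rate : vnorm (nz Pb) (vsub (zbar j) zinf) < del ->
  vnorm (nz Pb) (vsub (zbar (S j)) zinf)
    <= Cc * Rpower (INR M) (- psi) * vnorm (nz Pb) (vsub (zbar j) zinf).
Hypotheses (Hds_rs : ds <= rs) (Hds_rA : ds < rA) (Hds_rB : ds < rB).
Hypothesis Hds_qB : lamA * lamF * ds < qB * rho.
Hypothesis Hrw : rw < qB * rho.
Hypothesis Hdel : lamH * lamB * rs < del - (1 + lamH * lamB / rho) * rw.
Hypothesis Hej : ej < rw.

Lemma kkt_next_near : wball Pb (wh j) dA (wh (S j)).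
Proof.
  destruct HA as [wA [Hsol [_ Hnext]]]. unfold wball.
  rewrite (wnorm_sub_weq_l _ _ _ _ (Hnext Hds_rA)). now apply Hsol.
Qed.

Lemma kkt_drift : wnorm Pb (wsub (wh (S j)) (wh j)) <= lamA * lamF * ds.
Proof.
  destruct HA as [wA [Hsol [Hlip Hnext]]].
  destruct (Hsol (sig j) (sball_center _ _ _ HrA) HS0) as [_ [_ Huniq]].
  rewrite (wnorm_sub_weq_l _ _ _ _ (Hnext Hds_rA)),
          (wnorm_sub_weq_r _ _ _ _ (Huniq _ (wball_center _ _ _ HdA) HK0)).
  eapply Rle_trans; [apply Hlip; auto; apply sball_center; exact HrA|].
  rewrite Rmult_assoc. apply Rmult_le_compat_l; [lra|].
  rewrite wnorm_vnorm. cbn [fst snd wsub Ffun].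
  rewrite vnorm_zero by (intros; unfold vsub; ring).
  replace (0 ^ 2) with 0 by ring. rewrite Rplus_0_l, sqrt_pow2 by apply vnorm_nonneg.
  apply Gval_param_lipschitz, HlamF.
Qed.

Lemma vnorm_dshift_le w : vnorm (mq Pb) (dshift w) <= wnorm Pb (wsub w (wh j)) / rho.
Proof.
  rewrite (vnorm_ext _ _ (vsub (dshift w) (dshift (wh j)))) by (intros; unfold vsub, dshift; field; lra).
  now apply vnorm_dual_shift_le.
Qed.

Lemma kkt_weq_wB w s : sball Pb (sig j) rB s -> Sset Pb s -> KKT Pb w s ->
  wball Pb (wh j) dB w -> vnorm (mq Pb) (dshift w) < qB -> weq Pb w (wB (dshift w) s).
Proof.
  intros Hs HSs HKw Hw Hq. destruct HB as [Hsol _].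
  apply (Hsol _ _ Hq Hs HSs); [exact Hw|]. apply KKT_Hfun; [lra|exact HKw].
Qed.

Lemma dshift_iterate_lt : vnorm (mq Pb) (dshift (zbar j, mubar j)) < qB.
Proof.
  eapply Rle_lt_trans; [apply vnorm_dshift_le|].
  apply Rmult_lt_reg_r with rho; [exact Hrho|]. fold ej.
  unfold Rdiv. rewrite Rmult_assoc, Rinv_l; lra.
Qed.

Lemma winf_near_kkt : wnorm Pb (wsub winf (wh j)) <= lamB * lamH * (ej / rho + ds).
Proof.
  assert (Hq0 : vnorm (mq Pb) (dshift (wh j)) < qB).
  { eapply Rle_lt_trans; [apply vnorm_dshift_le|]. rewrite wnorm_sub_diag. unfold Rdiv. lra. }
  rewrite (wnorm_sub_weq_l _ _ _ _ (HC_solution dshift_iterate_lt Hds_rB)),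
          (wnorm_sub_weq_r _ _ _ _ (kkt_weq_wB (wh j) (sig j) (sball_center _ _ _ HrB) HS0 HK0
                                      (wball_center _ _ _ (Rlt_le_trans _ _ _ HdA HdAB)) Hq0)).
  destruct HB as [_ Hlip].
  eapply Rle_trans; [apply Hlip; auto using dshift_iterate_lt, sball_center|].
  rewrite Rmult_assoc. apply Rmult_le_compat_l; [lra|].
  eapply Rle_trans; [apply Hfun_lipschitz, HlamH|].
  apply Rmult_le_compat_l; [lra|].
  apply Rplus_le_compat_r. apply vnorm_dual_shift_le, Hrho.
Qed.

Lemma winf_near_next_kkt :
  wnorm Pb (wsub winf (wh (S j))) <= lamB * lamH / rho * (ej + lamA * lamF * ds).
Proof.
  pose proof kkt_drift as Hdrift.
  assert (Hq1 : vnorm (mq Pb) (dshift (wh (S j))) < qB).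
  { eapply Rle_lt_trans; [apply vnorm_dshift_le|].
    apply Rmult_lt_reg_r with rho; [exact Hrho|].
    unfold Rdiv. rewrite Rmult_assoc, Rinv_l; lra. }
  pose proof kkt_next_near as Hnear. unfold wball in Hnear.
  rewrite (wnorm_sub_weq_l _ _ _ _ (HC_solution dshift_iterate_lt Hds_rB)),
          (wnorm_sub_weq_r _ _ _ _ (kkt_weq_wB (wh (S j)) (sig (S j)) Hds_rB HS1 HK1
                                      (Rlt_le_trans _ _ _ Hnear HdAB) Hq1)).
  destruct HB as [_ Hlip].
  eapply Rle_trans; [apply Hlip; auto using dshift_iterate_lt|].
  eapply Rle_trans; [apply Rmult_le_compat_l; [lra|apply Hfun_lipschitz, HlamH]|].
  rewrite vnorm_sub_diag, Rplus_0_r.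
  eapply Rle_trans; [apply Rmult_le_compat_l; [lra|];
                     apply Rmult_le_compat_l; [lra|apply vnorm_dual_shift_le, Hrho]|].
  assert (Htri : wnorm Pb (wsub (zbar j, mubar j) (wh (S j))) <= ej + lamA * lamF * ds).
  { eapply Rle_trans; [apply (wnorm_sub_triangle _ _ (wh j))|].
    rewrite (wnorm_sub_sym _ (wh j)). fold ej. lra. }
  replace (lamB * (lamH * (wnorm Pb (wsub (zbar j, mubar j) (wh (S j))) / rho)))
    with (lamB * lamH / rho * wnorm Pb (wsub (zbar j, mubar j) (wh (S j)))) by (field; lra).
  apply Rmult_le_compat_l; [|exact Htri].
  unfold Rdiv. apply Rmult_le_pos; [nra|left; now apply Rinv_0_lt_compat].
Qed.

Lemma primal_gap_le : vnorm (nz Pb) (vsub (zbar j) zinf) <= ej + lamB * lamH * (ej / rho + ds).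
Proof.
  eapply Rle_trans; [apply (vnorm_fst_le_wnorm Pb (wsub (zbar j, mubar j) winf))|].
  eapply Rle_trans; [apply (wnorm_sub_triangle _ _ (wh j))|].
  rewrite (wnorm_sub_sym _ (wh j)). pose proof winf_near_kkt. fold ej. lra.
Qed.

Lemma primal_gap_lt : vnorm (nz Pb) (vsub (zbar j) zinf) < del.
Proof.
  eapply Rle_lt_trans; [apply primal_gap_le|].
  assert (0 <= ej) by apply wnorm_nonneg.
  assert (lamB * lamH * (ej / rho) <= lamH * lamB / rho * rw).
  { replace (lamB * lamH * (ej / rho)) with (lamH * lamB / rho * ej) by (field; lra).
    apply Rmult_le_compat_l; [|lra]. unfold Rdiv.
    apply Rmult_le_pos; [nra|left; now apply Rinv_0_lt_compat]. }
  assert (lamB * lamH * ds <= lamH * lamB * rs) by (rewrite (Rmult_comm lamB); apply Rmult_le_compat_l; nra).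
  lra.
Qed.

(* The multiplier update moves by rho times the change of G, which is lamG-Lipschitz in z. *)
Lemma next_near_winf :
  wnorm Pb (wsub (zbar (S j), mubar (S j)) winf)
    <= (1 + rho * lamG) * (Cc * Rpower (INR M) (- psi) * vnorm (nz Pb) (vsub (zbar j) zinf)).
Proof.
  assert (Hzinf : inZ Pb zinf) by now apply (sweep_limit_inZ Pb c0 alpha beta rho (mubar j) (sig (S j)) (zbar j)).
  assert (Hdual : vnorm (mq Pb) (vsub (mubar (S j)) (snd winf))
                  <= rho * lamG * vnorm (nz Pb) (vsub (zbar (S j)) zinf)).
  { rewrite (vnorm_ext _ _ (fun r => rho * vsub (fun r => Gval Pb (zbar (S j)) (sig (S j)) r)
                                                 (fun r => Gval Pb zinf (sig (S j)) r) r))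
      by (intros; unfold vsub; simpl; rewrite Hmu; ring).
    rewrite vnorm_scal, Rabs_right, Rmult_assoc by lra.
    apply Rmult_le_compat_l; [lra|]. now apply HlamG. }
  pose proof (HC_rate primal_gap_lt) as Hrate.
  pose proof (vnorm_nonneg (nz Pb) (vsub (zbar (S j)) zinf)).
  eapply Rle_trans; [apply wnorm_le_fst_snd|]. cbn [fst snd wsub]. change (fst winf) with zinf.
  assert (rho * lamG * vnorm (nz Pb) (vsub (zbar (S j)) zinf)
          <= rho * lamG * (Cc * Rpower (INR M) (- psi) * vnorm (nz Pb) (vsub (zbar j) zinf)))
    by (apply Rmult_le_compat_l; nra).
  lra.
Qed.

Theorem homotopy_step_contraction :
  wnorm Pb (wsub (zbar (S j), mubar (S j)) (wh (S j)))
    <= beta_w Cc lamG lamB lamH psi rho M * ej + beta_s Cc lamG lamB lamH lamA lamF psi rho M * ds.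
Proof.
  assert (HK : 0 <= Cc * Rpower (INR M) (- psi)).
  { pose proof (Rpower_pos (INR M) (- psi)). nra. }
  assert (Hnext : wnorm Pb (wsub (zbar (S j), mubar (S j)) winf)
          <= (1 + rho * lamG) * (Cc * Rpower (INR M) (- psi)) * (ej + lamB * lamH * (ej / rho + ds))).
  { eapply Rle_trans; [apply next_near_winf|]. rewrite (Rmult_assoc (1 + rho * lamG)).
    apply Rmult_le_compat_l; [nra|]. apply Rmult_le_compat_l; [exact HK|apply primal_gap_le]. }
  eapply Rle_trans; [apply (wnorm_sub_triangle _ _ winf)|].
  eapply Rle_trans; [apply Rplus_le_compat; [exact Hnext|apply winf_near_next_kkt]|].
  unfold beta_w, beta_s. right. field. lra.
Qed.

End HomotopyStep.


Lemma Rdiv_le_self x n : 0 <= x -> 1 <= n -> x / n <= x.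
Proof.
  intros Hx Hn. unfold Rdiv. rewrite <- (Rmult_1_r x) at 2. apply Rmult_le_compat_l; [exact Hx|].
  rewrite <- Rinv_1. apply Rinv_le_contravar; lra.
Qed.

Lemma Rmult_lt_of_lt_div b x y a : 0 < b -> x <= y -> y < a / b -> b * x < a.
Proof.
  intros Hb Hxy Hy. apply Rle_lt_trans with (b * y); [now apply Rmult_le_compat_l; lra|].
  apply Rmult_lt_compat_l with (r := b) in Hy; [|exact Hb].
  replace (b * (a / b)) with a in Hy by (field; lra). exact Hy.
Qed.

Lemma fsum_pow_S b n : fsum (S n) (fun i => b ^ i) = 1 + b * fsum n (fun i => b ^ i).
Proof.
  induction n; [simpl; ring|].
  rewrite (fsum_S (S n)), IHn at 1. rewrite fsum_S. simpl; ring.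
Qed.

(* The invariant e_j < r keeps every step inside the region where the step estimate holds. *)
Lemma perturbed_contraction_unroll (b c r : R) (e : nat -> R) (D : nat) :
  0 <= b -> c < (1 - b) * r -> e O < r ->
  (forall j, (j < D)%nat -> e j < r -> e (S j) <= b * e j + c) ->
  e D <= b ^ D * e O + c * fsum D (fun i => b ^ i).
Proof.
  intros Hb Hc He0 Hstep.
  enough (Hinv : forall j, (j <= D)%nat -> e j < r /\ e j <= b ^ j * e O + c * fsum j (fun i => b ^ i))
    by apply (Hinv D (le_n D)).
  induction j as [|j IH]; intros Hj; [simpl; lra|].
  destruct IH as [Hlt Hle]; [lia|].
  pose proof (Hstep j ltac:(lia) Hlt) as Hnext.
  assert (b * e j <= b * r) by (apply Rmult_le_compat_l; lra).
  assert (b * e j <= b * (b ^ j * e O + c * fsum j (fun i => b ^ i))) by (apply Rmult_le_compat_l; lra).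
  rewrite fsum_pow_S. simpl pow. split; lra.
Qed.

Lemma shom_step_norm Pb s k D j : (0 < D)%nat ->
  vnorm (np Pb) (vsub (shom s k D (S j)) (shom s k D j))
    = vnorm (np Pb) (vsub (s (S k)) (s k)) / INR D.
Proof.
  intros HD. apply lt_0_INR in HD.
  rewrite (vnorm_ext _ _ (fun c => / INR D * vsub (s (S k)) (s k) c)).
  - rewrite vnorm_scal, Rabs_right by (left; now apply Rinv_0_lt_compat).
    unfold Rdiv. ring.
  - intros c _. unfold shom, vsub. rewrite S_INR. field. lra.
Qed.

Lemma beta_w_nonneg Cc lamG lamB lamH psi rho M :
  0 < Cc -> 0 < rho -> 0 < lamG -> 0 < lamB -> 0 < lamH -> 0 <= beta_w Cc lamG lamB lamH psi rho M.
Proof.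
  intros HCc Hrho HlamG HlamB HlamH. unfold beta_w.
  assert (0 < lamB * lamH / rho).
  { unfold Rdiv. repeat apply Rmult_lt_0_compat; auto. now apply Rinv_0_lt_compat. }
  assert (0 < rho * lamG) by now apply Rmult_lt_0_compat.
  assert (0 < Cc * (1 + rho * lamG) * (1 + lamB * lamH / rho) * Rpower (INR M) (- psi));
    [repeat apply Rmult_lt_0_compat; auto; try lra; apply Rpower_pos|lra].
Qed.

Lemma beta_s_pos Cc lamG lamB lamH lamA lamF psi rho M :
  0 < Cc -> 0 < rho -> 0 < lamG -> 0 < lamB -> 0 < lamH -> 0 < lamA -> 0 <= lamF ->
  0 < beta_s Cc lamG lamB lamH lamA lamF psi rho M.
Proof.
  intros HCc Hrho HlamG HlamB HlamH HlamA HlamF. unfold beta_s.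
  assert (0 < rho * lamG) by now apply Rmult_lt_0_compat.
  assert (0 <= lamB * lamH * lamA * lamF / rho).
  { unfold Rdiv. apply Rmult_le_pos; [|left; now apply Rinv_0_lt_compat].
    repeat apply Rmult_le_pos; lra. }
  assert (0 < Cc * (1 + rho * lamG) * lamB * lamH * Rpower (INR M) (- psi));
    [repeat apply Rmult_lt_0_compat; auto; try lra; apply Rpower_pos|lra].
Qed.
Theorem mainTheorem12
  (Pb : problem) (c0 alpha : nat -> R) (beta rho : R) (M : nat)
  (lamF lamH lamG : R)
  (rA dA lamA rB qB lamB dB Cc del psi : R)
  (s : nat -> vec) (k D : nat) (wst : nat -> W) (wh : nat -> W)
  (zbar mubar : nat -> vec) (rw rs : R) :
  wf_problem Pb ->
  (forall i, (i < nP Pb)%nat -> 0 < c0 i) ->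
  (forall i, (i < nP Pb)%nat -> 0 < alpha i) ->
  1 < beta ->
  0 < rho -> (1 <= M)%nat ->
  lamF_def Pb lamF -> lamH_prop Pb rho lamH -> lamG_prop Pb lamG ->
  (2 <= D)%nat ->
  (forall j, (j <= D)%nat -> Sset Pb (shom s k D j)) ->
  (forall j, (j <= D)%nat -> KKT Pb (wh j) (shom s k D j)) ->
  weq Pb (wh O) (wst k) -> weq Pb (wh D) (wst (S k)) ->
  inZ Pb (zbar O) ->
  (forall j, (j < D)%nat ->
     Msweeps Pb c0 alpha beta rho (mubar j) (shom s k D (S j)) M (zbar j) (zbar (S j)) /\
     (forall r, mubar (S j) r = mubar j r + rho * Gval Pb (zbar (S j)) (shom s k D (S j)) r)) ->
  0 < rA -> 0 < dA -> 0 < lamA -> 0 < rB -> 0 < qB -> 0 < lamB -> dA <= dB ->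
  0 < Cc -> 0 < del -> 0 < psi ->
  (forall j, (j < D)%nat ->
     HypA Pb (shom s k D) wh j rA dA lamA /\
     exists wB, HypB Pb rho (shom s k D) wh j rB qB lamB dB wB /\
                HypC Pb c0 alpha beta rho M (shom s k D) wh zbar mubar j rB qB wB Cc del psi) ->
  beta_w Cc lamG lamB lamH psi rho M < 1 ->
  beta_s Cc lamG lamB lamH lamA lamF psi rho M < 1 ->
  0 < rw -> 0 < rs ->
  rw < qB * rho ->
  del - (1 + lamH * lamB / rho) * rw > 0 ->
  rs < (1 - beta_w Cc lamG lamB lamH psi rho M) * rw / beta_s Cc lamG lamB lamH lamA lamF psi rho M ->
  lamH * lamB * rs < del - (1 + lamH * lamB / rho) * rw ->
  wnorm Pb (wsub (zbar O, mubar O) (wst k)) < rw ->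
  vnorm (np Pb) (vsub (s (S k)) (s k)) <= rs ->
  vnorm (np Pb) (vsub (s (S k)) (s k)) < rA ->
  vnorm (np Pb) (vsub (s (S k)) (s k)) < rB ->
  lamA * lamF * vnorm (np Pb) (vsub (s (S k)) (s k)) < qB * rho ->
  wnorm Pb (wsub (zbar D, mubar D) (wst (S k)))
    <= beta_w Cc lamG lamB lamH psi rho M ^ D * wnorm Pb (wsub (zbar O, mubar O) (wst k))
       + beta_s Cc lamG lamB lamH lamA lamF psi rho M
         * (fsum D (fun i => beta_w Cc lamG lamB lamH psi rho M ^ i) / INR D)
         * vnorm (np Pb) (vsub (s (S k)) (s k)).
Proof.
  intros Hwf _ _ _ Hrho _ HlamF HlamH HlamG HD HS HK Hwh0 HwhD HZ0 Hscheme HrA HdA HlamA HrB HqB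
    HlamB HdAB HCc _ _ Hyp _ _ _ _ Hrw _ Hrs Hdel He0 Hds_rs Hds_rA Hds_rB Hds_qB.
  set (bw := beta_w Cc lamG lamB lamH psi rho M) in *.
  set (bs := beta_s Cc lamG lamB lamH lamA lamF psi rho M) in *.
  set (Dl := vnorm (np Pb) (vsub (s (S k)) (s k))) in *.
  assert (Hstep : forall j, vnorm (np Pb) (vsub (shom s k D (S j)) (shom s k D j)) = Dl / INR D)
    by (intros; apply shom_step_norm; lia).
  assert (HDl : Dl / INR D <= Dl)
    by (apply Rdiv_le_self; [apply vnorm_nonneg|change 1 with (INR 1); apply le_INR; lia]).
  assert (HlamAF : 0 <= lamA * lamF) by (apply Rmult_le_pos; [lra|now apply (lamF_nonneg Pb)]).
  assert (Hbs0 : 0 < bs) by (apply beta_s_pos; auto; apply HlamH || apply HlamG || now apply (lamF_nonneg Pb)).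
  rewrite <- (wnorm_sub_weq_r _ _ _ _ Hwh0) in He0 |- *. rewrite <- (wnorm_sub_weq_r _ _ _ _ HwhD).
  eapply Rle_trans.
  - apply (perturbed_contraction_unroll bw (bs * (Dl / INR D)) rw
             (fun j => wnorm Pb (wsub (zbar j, mubar j) (wh j))) D); [| |exact He0|].
    + apply beta_w_nonneg; auto; apply HlamH || apply HlamG.
    + apply (Rmult_lt_of_lt_div bs _ rs); lra.
    + intros j Hj Hej. destruct (Hyp j Hj) as [HA [wB [HB [zinf [HC1 [HC2 HC3]]]]]].
      destruct (Hscheme j Hj) as [_ Hmu].
      assert (HZ := Msweeps_chain_inZ Pb c0 alpha beta rho M (shom s k D) zbar mubar D Hwf HZ0
                      (fun j Hj => proj1 (Hscheme j Hj))).
      rewrite <- (Hstep j).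
      apply (homotopy_step_contraction Pb c0 alpha beta rho M lamF lamH lamG rA dA lamA rB qB lamB dB
        Cc del psi rw rs (shom s k D) wh zbar mubar j wB zinf); auto with arith; rewrite Hstep; nra.
  - right. unfold Rdiv. ring.
Qed.
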